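(* In the single-block Spice setting, at any iteration $k$ (with $\mathsf{R}(x^k)>0$ and $\mathsf{R}(\bar x^k)>0$), the matrices satisfy $H_k=Q_kM_k^{-1}\succ 0$ and $G_k=Q_k^\top+Q_k-M_k^\top H_k M_k\succ 0$ (with $H_k$, $G_k$ equal to the explicit matrices given in the context), and $$\rho\,[f(x)-f(\bar x^k)]+(w-\bar w^k)^\top\tfrac{1}{\eta_k}\Gamma(\bar w^k)\ \ge\ \tfrac12\|\bar w^k-w^k\|_{G_k}^2+\tfrac12\big(\|w-w^{k+1}\|_{H_k}^2-\|w-w^k\|_{H_k}^2\big)\qquad\forall\,w=(x,\lambda)\in\Omega .$$
   Context: Single-block Spice setting. Let $\mathcal{X}\subseteq\mathbb{R}^n$ be nonempty closed convex, $f:\mathbb{R}^n\to\mathbb{R}$ convex, $\phi_1,\dots,\phi_p:\mathbb{R}^n\to\mathbb{R}$ convex and continuously differentiable, $\Phi(x)=(\phi_1(x),\dots,\phi_p(x))^\top$, $\mathcal{D}\Phi(x)\in\mathbb{R}^{p\times n}$ its Jacobian. Let $\mathcal{Z}=\mathbb{R}^p_+$, $\Omega=\mathcal{X}\times\mathcal{Z}$, $w=(x,\lambda)$, $\Gamma(w)=(\mathcal{D}\Phi(x)^\top\lambda,\,-\Phi(x))$. For a symmetric matrix $A$, $\|v\|_A^2:=v^\top A v$; the norm of a matrix is the spectral norm; $\mathsf{R}(x):=\|\mathcal{D}\Phi(x)\|^2$. The scaled Lagrangian is $\mathcal{L}(x,\lambda,\rho,\eta)=\rho f(x)+\frac1\eta\lambda^\top\Phi(x)$.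 Fix $\rho>0$, $\mu>1$, a starting point $w^0=(x^0,\lambda^0)\in\Omega$ and positive numbers $\eta_0,\eta_1,\dots$. Given $w^k=(x^k,\lambda^k)\in\Omega$, iteration $k$ is: $r_k=\frac{1}{\eta_k}\sqrt{\mathsf{R}(x^k)}$; $\bar x^k=\arg\min_{x\in\mathcal{X}}\{\mathcal{L}(x,\lambda^k,\rho,\eta_k)+\frac{r_k}{2}\|x-x^k\|^2\}$; $s_k=\frac{\mu\,\mathsf{R}(\bar x^k)}{\eta_k\sqrt{\mathsf{R}(x^k)}}$; $\bar\lambda^k=\arg\max_{\lambda\in\mathcal{Z}}\{\mathcal{L}(\bar x^k,\lambda,\rho,\eta_k)-\frac{s_k}{2}\|\lambda-\lambda^k\|^2\}$ (equivalently $\bar\lambda^k=\max\{\lambda^k+\frac{1}{\eta_k s_k}\Phi(\bar x^k),0\}$ componentwise); $\bar w^k=(\bar x^k,\bar\lambda^k)$; and $w^{k+1}=w^k-M_k(w^k-\bar w^k)$ where $M_k=\begin{pmatrix}I_n & -\frac{1}{\eta_k r_k}\mathcal{D}\Phi(\bar x^k)^\top\\ 0 & I_p\end{pmatrix}$. It is assumed throughout that $\mathsf{R}(x^k)>0$ and $\mathsf{R}(\bar x^k)>0$ for all $k$. Define $Q_k=\begin{pmatrix} r_kI_n & -\frac{1}{\eta_k}\mathcal{D}\Phi(\bar x^k)^\top\\ 0 & s_kI_p\end{pmatrix}$, $H_k=\begin{pmatrix} r_kI_n&0\\0&s_kI_p\end{pmatrix}$, $G_k=\begin{pmatrix} r_kI_n&0\\0&s_kI_p-\frac{1}{\eta_k^2r_k}\mathcal{D}\Phi(\bar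 x^k)\mathcal{D}\Phi(\bar x^k)^\top\end{pmatrix}$. *)

From HB Require Import structures.
From mathcomp Require Import all_boot all_order all_algebra.
From mathcomp Require Import all_classical all_reals all_analysis.
Set Implicit Arguments. Unset Strict Implicit. Unset Printing Implicit Defensive.
Import Order.TTheory GRing.Theory Num.Theory.
Import numFieldNormedType.Exports.
Local Open Scope classical_set_scope.
Local Open Scope ring_scope.

Section SpiceDefs.
Variable R : realType.

Definition dotv (m : nat) (u v : 'cV[R]_m) : R := (u^T *m v) 0 0.
Definition sqn (m : nat) (u : 'cV[R]_m) : R := dotv u u.
Definition enorm (m : nat) (u : 'cV[R]_m) : R := Num.sqrt (sqn u).
Definition qform (m : nat) (A : 'M[R]_m) (v : 'cV[R]_m) : R := (v^T *m A *m v) 0 0.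
Definition posdef (m : nat) (A : 'M[R]_m) : Prop :=
  A^T = A /\ forall v : 'cV[R]_m, v != 0 -> 0 < qform A v.
Definition specnorm (p n : nat) (A : 'M[R]_(p, n)) : R :=
  sup [set enorm (A *m v) | v in [set v : 'cV[R]_n | enorm v <= 1]].
Definition nonnegv (p : nat) (l : 'cV[R]_p) : Prop := forall i, 0 <= l i 0.

Definition convex_setv (n : nat) (X : set 'cV[R]_n) : Prop :=
  forall x y t, X x -> X y -> 0 <= t <= 1 -> X (t *: x + (1 - t) *: y).
Definition convex_funv (n : nat) (g : 'cV[R]_n -> R) : Prop :=
  forall x y t, 0 <= t <= 1 -> g (t *: x + (1 - t) *: y) <= t * g x + (1 - t) * g y.

Definition Rfun (p n : nat) (J : 'cV[R]_n -> 'M[R]_(p, n)) (x : 'cV[R]_n) : R :=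
  specnorm (J x) ^+ 2.
Definition Lag (p n : nat) (f : 'cV[R]_n -> R) (Phi : 'cV[R]_n -> 'cV[R]_p)
  (x : 'cV[R]_n) (l : 'cV[R]_p) (rho eta : R) : R :=
  rho * f x + eta^-1 * dotv l (Phi x).
Definition Gam (p n : nat) (Phi : 'cV[R]_n -> 'cV[R]_p) (J : 'cV[R]_n -> 'M[R]_(p, n))
  (x : 'cV[R]_n) (l : 'cV[R]_p) : 'cV[R]_(n + p) :=
  col_mx ((J x)^T *m l) (- Phi x).

Definition Mmat (p n : nat) (eta r : R) (D : 'M[R]_(p, n)) : 'M[R]_(n + p) :=
  block_mx 1%:M (- ((eta * r)^-1 *: D^T)) 0 1%:M.
Definition Qmat (p n : nat) (eta r s : R) (D : 'M[R]_(p, n)) : 'M[R]_(n + p) :=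
  block_mx (r%:M) (- (eta^-1 *: D^T)) 0 (s%:M).
Definition Hmat (p n : nat) (r s : R) : 'M[R]_(n + p) :=
  block_mx (r%:M) 0 0 (s%:M).
Definition Gmat (p n : nat) (eta r s : R) (D : 'M[R]_(p, n)) : 'M[R]_(n + p) :=
  block_mx (r%:M) 0 0 (s%:M - (eta ^+ 2 * r)^-1 *: (D *m D^T)).

End SpiceDefs.

(* Both proximal subproblems are convex, so the minimizer x̄ and the maximizer
   λ̄ satisfy first-order variational inequalities; for x̄ the term λᵀΦ enters
   through its derivative D = DΦ(x̄) at x̄.  The prediction matrix factors as
   Q = H M with H = diag(r, s), and M only corrects the x-block by
   Dᵀ(λ̄ - λᵏ)/(η r).  Expanding the H- and G-norms, the claimed inequality is
   exactly the sum of the two variational inequalities: the correction turns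
   the derivative term at λᵏ into the term Γ(w̄) at λ̄ and contributes the
   -DDᵀ/(η² r) block of G.  Finally G ≻ 0 because ‖Dᵀλ‖² ≤ R(x̄)‖λ‖² and
   s = μ R(x̄)/(η √R(xᵏ)) with μ > 1. *)

From HB Require Import structures.
From mathcomp Require Import all_boot all_order all_algebra.
From mathcomp Require Import all_classical all_reals all_analysis.
From mathcomp Require Import ring lra.
Import Order.TTheory GRing.Theory Num.Theory.
Import numFieldNormedType.Exports.
Local Open Scope classical_set_scope.
Local Open Scope ring_scope.
Set Implicit Arguments. Unset Strict Implicit. Unset Printing Implicit Defensive.

Section InnerProduct.
Variable R : realType.
Implicit Types (m k : nat) (a c : R).

Lemma dotvE m (u v : 'cV[R]_m) : dotv u v = \sum_i u i 0 * v i 0.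
Proof. by rewrite /dotv mxE; apply: eq_bigr => i _; rewrite mxE. Qed.

Lemma dotvC m (u v : 'cV[R]_m) : dotv u v = dotv v u.
Proof. by rewrite !dotvE; apply: eq_bigr => i _; rewrite mulrC. Qed.

Lemma dotvDl m (u w v : 'cV[R]_m) : dotv (u + w) v = dotv u v + dotv w v.
Proof. by rewrite !dotvE -big_split; apply: eq_bigr => i _; rewrite mxE mulrDl. Qed.

Lemma dotvZl m a (u v : 'cV[R]_m) : dotv (a *: u) v = a * dotv u v.
Proof. by rewrite !dotvE mulr_sumr; apply: eq_bigr => i _; rewrite mxE mulrA. Qed.

Lemma dotvNl m (u v : 'cV[R]_m) : dotv (- u) v = - dotv u v.
Proof. by rewrite -scaleN1r dotvZl mulN1r. Qed.

Lemma dotvBl m (u w v : 'cV[R]_m) : dotv (u - w) v = dotv u v - dotv w v.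
Proof. by rewrite dotvDl dotvNl. Qed.

Lemma dotvDr m (u w v : 'cV[R]_m) : dotv v (u + w) = dotv v u + dotv v w.
Proof. by rewrite dotvC dotvDl !(dotvC v). Qed.

Lemma dotvZr m a (u v : 'cV[R]_m) : dotv v (a *: u) = a * dotv v u.
Proof. by rewrite dotvC dotvZl dotvC. Qed.

Lemma dotvNr m (u v : 'cV[R]_m) : dotv v (- u) = - dotv v u.
Proof. by rewrite dotvC dotvNl dotvC. Qed.

Lemma dotvBr m (u w v : 'cV[R]_m) : dotv v (u - w) = dotv v u - dotv v w.
Proof. by rewrite dotvDr dotvNr. Qed.

Lemma dotv0l m (v : 'cV[R]_m) : dotv 0 v = 0.
Proof. by rewrite -(scale0r 0) dotvZl mul0r. Qed.

Lemma dotv_mulmxr m k (A : 'M[R]_(k, m)) (u : 'cV[R]_k) (v : 'cV[R]_m) :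
  dotv u (A *m v) = dotv (A^T *m u) v.
Proof. by rewrite /dotv trmx_mul trmxK mulmxA. Qed.

Lemma dotv_col_mx m1 m2 (u1 v1 : 'cV[R]_m1) (u2 v2 : 'cV[R]_m2) :
  dotv (col_mx u1 u2) (col_mx v1 v2) = dotv u1 v1 + dotv u2 v2.
Proof. by rewrite /dotv tr_col_mx mul_row_col mxE. Qed.

Lemma dotv_continuous m (u : 'cV[R]_m) : continuous (dotv u).
Proof.
move=> v; rewrite (_ : dotv u = fun w => \sum_i u i 0 * w i 0); last first.
  by apply/funext => w; rewrite dotvE.
apply: (@cvg_big _ _ +%R 0 _ (@add_continuous _) _ (nbhs v) _ _ _ _) => i _.
by apply: cvgM; [exact: cvg_cst | exact: coord_continuous].
Qed.

Lemma sqn_ge0 m (v : 'cV[R]_m) : 0 <= sqn v.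
Proof. by rewrite /sqn dotvE sumr_ge0 // => i _; rewrite -expr2 sqr_ge0. Qed.

Lemma sqn_eq0 m (v : 'cV[R]_m) : (sqn v == 0) = (v == 0).
Proof.
apply/idP/eqP => [|->]; last by rewrite /sqn dotv0l.
rewrite /sqn dotvE psumr_eq0 => [/allP v0|i _]; last by rewrite -expr2 sqr_ge0.
apply/matrixP => i j; rewrite (ord1 j) mxE.
by have := v0 i (mem_index_enum _); rewrite -expr2 sqrf_eq0 => /eqP.
Qed.

Lemma sqn_gt0 m (v : 'cV[R]_m) : (0 < sqn v) = (v != 0).
Proof. by rewrite lt_def sqn_eq0 sqn_ge0 andbT. Qed.

Lemma sqnZ m a (v : 'cV[R]_m) : sqn (a *: v) = a ^+ 2 * sqn v.
Proof. by rewrite /sqn dotvZl dotvZr mulrA expr2. Qed.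

Lemma sqnD m (u v : 'cV[R]_m) : sqn (u + v) = sqn u + 2 * dotv u v + sqn v.
Proof. by rewrite /sqn dotvDl !dotvDr (dotvC v u); ring. Qed.

Lemma entry_sqr_le_sqn m (v : 'cV[R]_m) i : v i 0 ^+ 2 <= sqn v.
Proof.
rewrite /sqn dotvE (bigD1 i) //= -expr2 lerDl sumr_ge0 // => j _.
by rewrite -expr2 sqr_ge0.
Qed.

Lemma dotv_le_sqn m (u v : 'cV[R]_m) c : 0 < c ->
  2 * dotv u v <= c * sqn u + c^-1 * sqn v.
Proof.
move=> c0; have := sqn_ge0 (c *: u - v).
rewrite sqnD sqnZ dotvNr dotvZl (_ : sqn (- v) = sqn v); last first.
  by rewrite /sqn dotvNl dotvNr opprK.
move=> h; rewrite -subr_ge0 -(pmulr_rge0 _ c0).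
have -> : c * (c * sqn u + c^-1 * sqn v - 2 * dotv u v)
          = c ^+ 2 * sqn u + 2 * - (c * dotv u v) + sqn v.
  by field; rewrite gt_eqF.
exact: h.
Qed.

End InnerProduct.

Section SpectralNorm.
Variable R : realType.
Implicit Types (m k : nat).

Lemma enorm_ge0 m (v : 'cV[R]_m) : 0 <= enorm v.
Proof. exact: sqrtr_ge0. Qed.

Lemma enorm0 m : enorm (0 : 'cV[R]_m) = 0.
Proof. by rewrite /enorm /sqn dotv0l sqrtr0. Qed.

Lemma enorm_sqr m (v : 'cV[R]_m) : enorm v ^+ 2 = sqn v.
Proof. by rewrite sqr_sqrtr // sqn_ge0. Qed.

Lemma enormZ m (a : R) (v : 'cV[R]_m) : enorm (a *: v) = `|a| * enorm v.
Proof. by rewrite /enorm sqnZ sqrtrM ?sqr_ge0 // sqrtr_sqr. Qed.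

Lemma specnorm_has_sup k m (A : 'M[R]_(k, m)) :
  has_sup [set enorm (A *m v) | v in [set v : 'cV[R]_m | enorm v <= 1]].
Proof.
split; first by exists (enorm (A *m 0)), 0; rewrite //= enorm0.
pose c i := \sum_j `|A i j|.
exists (Num.sqrt (\sum_i c i ^+ 2)) => _ [v /= v1 <-].
rewrite /enorm ler_sqrt; last by rewrite sumr_ge0 // => i _; rewrite sqr_ge0.
have v_le1 j : `|v j 0| <= 1.
  rewrite -(@expr_le1 _ 2) // real_normK ?num_real //.
  by rewrite (le_trans (entry_sqr_le_sqn v j)) // -enorm_sqr expr_le1 ?enorm_ge0.
rewrite /sqn dotvE; apply: ler_sum => i _.
rewrite -expr2 -[X in X <= _]real_normK ?num_real // ler_sqr ?nnegrE ?sumr_ge0 //.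
rewrite mxE (le_trans (ler_norm_sum _ _ _)) //; apply: ler_sum => j _.
by rewrite normrM -[X in _ <= X]mulr1 ler_wpM2l.
Qed.

Lemma specnorm_ge0 k m (A : 'M[R]_(k, m)) : 0 <= specnorm A.
Proof.
apply: le_trans (sup_upper_bound (specnorm_has_sup A) _); last first.
  by exists 0; rewrite //= enorm0 ler01.
exact: enorm_ge0.
Qed.

Lemma enorm_mulmx_le k m (A : 'M[R]_(k, m)) u :
  enorm (A *m u) <= specnorm A * enorm u.
Proof.
have [->|u0] := eqVneq u 0.
  by rewrite mulmx0 enorm0 mulr_ge0 ?specnorm_ge0 ?enorm_ge0.
have e0 : 0 < enorm u by rewrite sqrtr_gt0 sqn_gt0.
have unit_ball : enorm ((enorm u)^-1 *: u) <= 1.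
  by rewrite enormZ ger0_norm ?invr_ge0 ?enorm_ge0 // mulVf // gt_eqF.
have := sup_upper_bound (specnorm_has_sup A)
  (ex_intro2 _ _ ((enorm u)^-1 *: u) unit_ball erefl).
rewrite -scalemxAr enormZ ger0_norm ?invr_ge0 ?enorm_ge0 //.
by rewrite ler_pdivrMl // mulrC.
Qed.

Lemma sqn_mulmx_le k m (A : 'M[R]_(k, m)) u :
  sqn (A *m u) <= specnorm A ^+ 2 * sqn u.
Proof.
rewrite -!enorm_sqr -exprMn ler_sqr ?nnegrE ?enorm_ge0 ?enorm_mulmx_le //.
by rewrite mulr_ge0 ?specnorm_ge0 ?enorm_ge0.
Qed.

Lemma sqn_trmx_mulmx_le k m (A : 'M[R]_(k, m)) b :
  sqn (A^T *m b) <= specnorm A ^+ 2 * sqn b.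
Proof.
set u := A^T *m b; set S := specnorm A ^+ 2.
have uE : sqn u = dotv b (A *m u) by rewrite dotv_mulmxr.
have Au_le := sqn_mulmx_le A u; rewrite -/S in Au_le.
have [S0|S0] := eqVneq S 0.
  have /eqP Au0 : A *m u == 0.
    by rewrite -sqn_eq0 eq_le sqn_ge0 andbT (le_trans Au_le) // S0 mul0r.
  by rewrite uE Au0 /dotv mulmx0 mxE S0 mul0r.
have S_gt0 : 0 < S by rewrite lt_def S0 sqr_ge0.
have := dotv_le_sqn b (A *m u) S_gt0; rewrite -uE.
have : S^-1 * sqn (A *m u) <= sqn u by rewrite ler_pdivrMl // mulrC.
lra.
Qed.

End SpectralNorm.

Section PositiveDefinite.
Variable R : realType.
Implicit Types (m k : nat) (c : R).

Lemma qform_block_diag m1 m2 (A : 'M[R]_m1) (B : 'M[R]_m2) a b :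
  qform (block_mx A 0 0 B) (col_mx a b) = qform A a + qform B b.
Proof.
rewrite /qform tr_col_mx mul_row_block !mulmx0 addr0 add0r mul_row_col.
by rewrite mxE.
Qed.

Lemma qform0 m (A : 'M[R]_m) : qform A 0 = 0.
Proof. by rewrite /qform mulmx0 mxE. Qed.

Lemma qform_scalar m c (a : 'cV[R]_m) : qform c%:M a = c * sqn a.
Proof. by rewrite /qform mul_mx_scalar -scalemxAl mxE. Qed.

Lemma qformB m (A B : 'M[R]_m) a : qform (A - B) a = qform A a - qform B a.
Proof. by rewrite /qform mulmxBr mulmxBl !mxE. Qed.

Lemma qformZ m c (A : 'M[R]_m) a : qform (c *: A) a = c * qform A a.
Proof. by rewrite /qform -scalemxAr -scalemxAl mxE. Qed.

Lemma qform_gram k m (D : 'M[R]_(k, m)) b : qform (D *m D^T) b = sqn (D^T *m b).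
Proof. by rewrite /qform /sqn /dotv trmx_mul trmxK !mulmxA. Qed.

Lemma posdef_qform_ge0 m (A : 'M[R]_m) v : posdef A -> 0 <= qform A v.
Proof.
case=> _ Apos; have [->|v0] := eqVneq v 0; last exact/ltW/Apos.
by rewrite qform0.
Qed.

Lemma posdef_block_diag m1 m2 (A : 'M[R]_m1) (B : 'M[R]_m2) :
  posdef A -> posdef B -> posdef (block_mx A 0 0 B).
Proof.
move=> posA posB; split.
  by rewrite tr_block_mx !trmx0 posA.1 posB.1.
move=> v; rewrite -(vsubmxK v) qform_block_diag.
have := posdef_qform_ge0 (usubmx v) posA; have := posdef_qform_ge0 (dsubmx v) posB.
have [-> _ _|u0 Bv Av] := eqVneq (usubmx v) 0.
  case: (eqVneq (dsubmx v) 0) => [->|d0 _]; first by rewrite col_mx0 eqxx.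
  by rewrite qform0 add0r (posB.2 _ d0).
by rewrite ltr_pwDl // posA.2.
Qed.

Lemma posdef_scalar m c : 0 < c -> posdef (c%:M : 'M[R]_m).
Proof.
by move=> c0; split=> [|v v0]; rewrite ?tr_scalar_mx // qform_scalar mulr_gt0 ?sqn_gt0.
Qed.

Lemma posdef_scalar_sub_gram k m (D : 'M[R]_(k, m)) c s :
  0 <= c -> c * specnorm D ^+ 2 < s -> posdef (s%:M - c *: (D *m D^T)).
Proof.
move=> c0 cDs; split.
  by rewrite linearB /= linearZ /= trmx_mul trmxK tr_scalar_mx.
move=> v v0; rewrite qformB qform_scalar qformZ qform_gram.
have := ler_wpM2l c0 (sqn_trmx_mulmx_le D v).
have : 0 < (s - c * specnorm D ^+ 2) * sqn v by rewrite mulr_gt0 ?subr_gt0 ?sqn_gt0.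
lra.
Qed.

End PositiveDefinite.

Section SpiceMatrices.
Variables (R : realType) (n p : nat) (eta r s : R) (D : 'M[R]_(p, n)).
Hypotheses (eta0 : eta != 0) (r0 : r != 0).

Lemma Mmat_unit : Mmat eta r D \in unitmx.
Proof. by rewrite unitmxE det_ublock !det1 mulr1 unitr1. Qed.

Lemma Qmat_Hmat_Mmat : Qmat eta r s D = Hmat p n r s *m Mmat eta r D.
Proof.
rewrite mulmx_block !mulmx1 !mul0mx !mulmx0 !addr0 !add0r mul_scalar_mx.
by rewrite scalerN scalerA invfM mulrCA divff ?mulr1.
Qed.

Lemma Hmat_Qmat_invmx : Hmat p n r s = Qmat eta r s D *m invmx (Mmat eta r D).
Proof. by rewrite Qmat_Hmat_Mmat -mulmxA mulmxV ?Mmat_unit ?mulmx1. Qed.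

Lemma Gmat_Qmat : let M := Mmat eta r D in let Q := Qmat eta r s D in
  Gmat eta r s D = Q^T + Q - M^T *m Hmat p n r s *m M.
Proof.
rewrite /= -mulmxA -Qmat_Hmat_Mmat !tr_block_mx !tr_scalar_mx !trmx0.
rewrite !linearN !linearZ /= trmxK mulmx_block.
rewrite ?mulmx1 ?mul1mx ?mul0mx ?mulmx0 ?addr0 ?add0r ?mulNmx ?mulmxN ?opprK.
rewrite -?scalemxAl -?scalemxAr ?mul_scalar_mx ?mul_mx_scalar ?scalerA.
rewrite opp_block_mx !add_block_mx invfM mulfVK //.
congr block_mx.
- by rewrite addrK.
- by rewrite add0r opprK addNr.
- by rewrite addr0 subrr.
- have -> : eta^-1 / r / eta = (eta ^+ 2 * r)^-1 by field; rewrite eta0 r0.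
  by rewrite mulNmx scalerN opprK opprD addrACA subrr addr0.
Qed.

Lemma posdef_Hmat : 0 < r -> 0 < s -> posdef (Hmat p n r s).
Proof. by move=> r_gt0 s_gt0; apply: posdef_block_diag; apply: posdef_scalar. Qed.

Lemma posdef_Gmat :
  0 < r -> (eta ^+ 2 * r)^-1 * specnorm D ^+ 2 < s -> posdef (Gmat eta r s D).
Proof.
move=> r_gt0 Ds; apply: posdef_block_diag; first exact: posdef_scalar.
by apply: posdef_scalar_sub_gram; rewrite // invr_ge0 mulr_ge0 ?sqr_ge0 ?ltW.
Qed.

End SpiceMatrices.

Section Optimality.
Variable R : realType.
Implicit Types (m : nat) (c : R).

Lemma convex_funvZ m c (g : 'cV[R]_m -> R) :
  0 <= c -> convex_funv g -> convex_funv (fun v => c * g v).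
Proof.
move=> c0 cg u v t t01; have := ler_wpM2l c0 (cg u v t t01).
by rewrite mulrDr (mulrCA c t) (mulrCA c (1 - t)).
Qed.

Lemma convex_funv_dotv m (a : 'cV[R]_m) : convex_funv (fun v => dotv v a).
Proof. by move=> u v t _; rewrite dotvDl !dotvZl. Qed.

Lemma convex_setv_nonnegv m : convex_setv (@nonnegv R m).
Proof.
move=> u v t u0 v0 /andP[t0 t1] i; rewrite !mxE.
by rewrite addr_ge0 // mulr_ge0 // subr_ge0.
Qed.

Lemma dotv_derive_cvg m k (Phi : 'cV[R]_m -> 'cV[R]_k) (u : 'cV[R]_k) c x d :
  differentiable Phi x ->
  (fun t => t^-1 * (c * dotv u (Phi (t *: d + x)) - c * dotv u (Phi x)))
    @ 0^' --> c * dotv u ('d Phi x d).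
Proof.
move=> dPhi; rewrite -deriveE //.
have quotient_cvg : (fun t => t^-1 *: (Phi (t *: d + x) - Phi x)) @ 0^' --> 'D_d Phi x.
  exact: diff_derivable.
rewrite (_ : (fun t => _) =
    (fun t => c * dotv u (t^-1 *: (Phi (t *: d + x) - Phi x)))); last first.
  by apply/funext => t; rewrite dotvZr dotvBr; ring.
apply: cvgMr; exact: (cvg_comp _ _ quotient_cvg (@dotv_continuous _ _ u _)).
Qed.

(* Compare [xb] with the points of the segment towards [x] and let the step
   tend to 0: convexity bounds the [f]-part, the difference quotient of [g]
   tends to [G], and the quadratic term is of second order. *)
Lemma prox_first_order m (f g : 'cV[R]_m -> R) (X : set 'cV[R]_m) xk xb x r G :
  convex_setv X -> convex_funv f -> X xb -> X x ->
  (forall y, X y -> f xb + g xb + r / 2 * sqn (xb - xk)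
                    <= f y + g y + r / 2 * sqn (y - xk)) ->
  (fun t => t^-1 * (g (t *: (x - xb) + xb) - g xb)) @ 0^' --> G ->
  0 <= f x - f xb + G + r * dotv (xb - xk) (x - xb).
Proof.
move=> cX cf Xb Xx xb_min G_cvg; set d := x - xb.
pose Q t := f x - f xb + t^-1 * (g (t *: d + xb) - g xb)
            + r * dotv (xb - xk) d + t * (r / 2 * sqn d).
have Q_ge0 t : 0 < t <= 1 -> 0 <= Q t.
  case/andP=> t0 t1; set y := t *: d + xb.
  have yE : y = t *: x + (1 - t) *: xb.
    by apply/matrixP => i j; rewrite !mxE; ring.
  have t01 : 0 <= t <= 1 by rewrite (ltW t0) t1.
  have Xy : X y by rewrite yE; exact: cX.
  have fy : f y <= t * f x + (1 - t) * f xb by rewrite yE; exact: cf.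
  have := xb_min y Xy.
  rewrite (_ : y - xk = t *: d + (xb - xk)); last by rewrite /y addrA.
  rewrite (sqnD (t *: d)) sqnZ dotvZl (dotvC d) => y_ge.
  rewrite -(pmulr_rge0 _ t0).
  have -> : t * Q t = t * (f x - f xb) + (g y - g xb)
                      + t * (r * dotv (xb - xk) d) + t ^+ 2 * (r / 2 * sqn d).
    by rewrite /Q; field; rewrite gt_eqF.
  lra.
have Q_cvg : Q @ 0^'+ --> f x - f xb + G + r * dotv (xb - xk) d + 0 * (r / 2 * sqn d).
  apply: cvgD; last by apply: cvgMl; exact: cvg_at_right_filter cvg_id.
  apply: cvgD; last exact: cvg_cst.
  by apply: cvgD; [exact: cvg_cst | exact: cvg_dnbhs_at_right].
rewrite mul0r addr0 in Q_cvg; apply: (cvgr_to_ge Q_cvg).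
near=> t; apply: Q_ge0; apply/andP; split; near: t.
  exact: nbhs_right_gt.
exact: nbhs_right_le ltr01.
Unshelve. all: by end_near.
Qed.

End Optimality.

Section SpiceStep.
Variable R : realType.
Variables (n p : nat) (f : 'cV[R]_n -> R) (Phi : 'cV[R]_n -> 'cV[R]_p).
Variables (rho eta : R) (xk xb : 'cV[R]_n) (lk lb : 'cV[R]_p).

Lemma Lag_prox_min_optimality (X : set 'cV[R]_n) r x :
  convex_setv X -> convex_funv f -> 0 <= rho -> differentiable Phi xb ->
  X xb -> X x ->
  (forall y, X y -> Lag f Phi xb lk rho eta + r / 2 * sqn (xb - xk)
                    <= Lag f Phi y lk rho eta + r / 2 * sqn (y - xk)) ->
  0 <= rho * (f x - f xb) + eta^-1 * dotv lk ('d Phi xb (x - xb))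
       + r * dotv (xb - xk) (x - xb).
Proof.
move=> cX cf rho0 dPhi Xb Xx xb_min; rewrite mulrBr.
apply: (prox_first_order (f := fun y => rho * f y)
          (g := fun y => eta^-1 * dotv lk (Phi y)) cX _ Xb Xx xb_min).
  exact: convex_funvZ.
exact: dotv_derive_cvg.
Qed.

Lemma Lag_prox_max_optimality s l :
  nonnegv lb -> nonnegv l ->
  (forall l', nonnegv l' -> Lag f Phi xb l' rho eta - s / 2 * sqn (l' - lk)
                            <= Lag f Phi xb lb rho eta - s / 2 * sqn (lb - lk)) ->
  0 <= - eta^-1 * dotv (l - lb) (Phi xb) + s * dotv (lb - lk) (l - lb).
Proof.
move=> lb0 l0 lb_max; set a := - eta^-1 *: Phi xb.
have aE v : dotv v a = - eta^-1 * dotv v (Phi xb) by rewrite dotvZr.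
suff : 0 <= dotv l a - dotv lb a + 0 + s * dotv (lb - lk) (l - lb).
  by rewrite -dotvBl aE addr0.
apply: (prox_first_order (f := fun v => dotv v a) (g := fun=> 0)
          (@convex_setv_nonnegv _ p) (convex_funv_dotv a) lb0 l0).
  by move=> l' l'0; have := lb_max l' l'0; rewrite /Lag !aE; lra.
rewrite (_ : (fun t => _) = fun=> 0); first exact: cvg_cst.
by apply/funext => t; rewrite subrr mulr0.
Qed.

End SpiceStep.

Lemma spice_descent (R : realType) (n p : nat) (eta r s a : R)
    (D : 'M[R]_(p, n)) (ph : 'cV[R]_p) (xk xb x : 'cV[R]_n) (lk lb l : 'cV[R]_p) :
  eta != 0 -> r != 0 ->
  0 <= a + eta^-1 * dotv lk (D *m (x - xb)) + r * dotv (xb - xk) (x - xb) ->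
  0 <= - eta^-1 * dotv (l - lb) ph + s * dotv (lb - lk) (l - lb) ->
  let wk := col_mx xk lk in let wb := col_mx xb lb in let w := col_mx x l in
  let wk1 := wk - Mmat eta r D *m (wk - wb) in
  a + dotv (w - wb) (eta^-1 *: col_mx (D^T *m lb) (- ph))
  >= 1 / 2 * qform (Gmat eta r s D) (wb - wk)
     + 1 / 2 * (qform (Hmat p n r s) (w - wk1) - qform (Hmat p n r s) (w - wk)).
Proof.
move=> eta0 r0 x_opt l_opt /=.
set wk := col_mx xk lk; set wb := col_mx xb lb; set w := col_mx x l.
set wk1 := wk - Mmat _ _ _ *m _.
have wbk : wb - wk = col_mx (xb - xk) (lb - lk) by rewrite opp_col_mx add_col_mx.
have wwb : w - wb = col_mx (x - xb) (l - lb) by rewrite opp_col_mx add_col_mx.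
have wwk : w - wk = col_mx ((x - xb) + (xb - xk)) ((l - lb) + (lb - lk)).
  by rewrite opp_col_mx add_col_mx !addrA !subrK.
set V := D^T *m (lb - lk).
have wwk1 : w - wk1 = col_mx ((x - xb) + (eta * r)^-1 *: V) (l - lb).
  rewrite /wk1 /w /wk /wb /Mmat opp_col_mx add_col_mx mul_block_col !mul1mx.
  rewrite mul0mx add0r mulNmx -scalemxAl !opp_col_mx !add_col_mx /V !mulmxBr.
  rewrite opp_col_mx add_col_mx.
  by congr col_mx; apply/matrixP => i j; rewrite !mxE; ring.
rewrite wbk wwb wwk wwk1 /Gmat /Hmat !qform_block_diag !qform_scalar qformB.
rewrite qform_scalar qformZ qform_gram scale_col_mx dotv_col_mx.
rewrite (sqnD (x - xb) ((eta * r)^-1 *: V)) (sqnD (x - xb) (xb - xk)).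
rewrite (sqnD (l - lb)) sqnZ !dotvZr dotvNr.
have VE : eta^-1 * dotv (x - xb) V
          = eta^-1 * dotv (x - xb) (D^T *m lb) - eta^-1 * dotv (x - xb) (D^T *m lk).
  by rewrite /V mulmxBr dotvBr mulrBr.
have sqnV : r * ((eta * r)^-1 ^+ 2 * sqn V) = (eta ^+ 2 * r)^-1 * sqn V.
  by field; rewrite eta0 r0.
have dotV : r * (2 * ((eta * r)^-1 * dotv (x - xb) V)) = 2 * (eta^-1 * dotv (x - xb) V).
  by field; rewrite eta0 r0.
rewrite dotv_mulmxr (dotvC _ (x - xb)) (dotvC (xb - xk)) in x_opt.
rewrite (dotvC (lb - lk)) in l_opt.
lra.
Qed.

Unset Implicit Arguments.

Theorem lemma3p2 (R : realType) (n p : nat) (X : set 'cV[R]_n)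
  (f : 'cV[R]_n -> R) (Phi : 'cV[R]_n -> 'cV[R]_p) (J : 'cV[R]_n -> 'M[R]_(p, n))
  (rho mu eta : R) (xk : 'cV[R]_n) (lk : 'cV[R]_p) (xb : 'cV[R]_n) (lb : 'cV[R]_p) :
  X !=set0 -> closed X -> convex_setv X ->
  convex_funv f ->
  (forall i : 'I_p, convex_funv (fun x => Phi x i 0)) ->
  (forall x, differentiable Phi x /\ forall v, 'd Phi x v = J x *m v) ->
  continuous J ->
  0 < rho -> 1 < mu -> 0 < eta ->
  X xk -> nonnegv lk ->
  0 < Rfun J xk ->
  let r := eta^-1 * Num.sqrt (Rfun J xk) in
  X xb ->
  (forall x, X x ->
     Lag f Phi xb lk rho eta + r / 2 * sqn (xb - xk)
       <= Lag f Phi x lk rho eta + r / 2 * sqn (x - xk)) ->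
  0 < Rfun J xb ->
  let s := mu * Rfun J xb / (eta * Num.sqrt (Rfun J xk)) in
  nonnegv lb ->
  (forall l, nonnegv l ->
     Lag f Phi xb l rho eta - s / 2 * sqn (l - lk)
       <= Lag f Phi xb lb rho eta - s / 2 * sqn (lb - lk)) ->
  let wk := col_mx xk lk in
  let wb := col_mx xb lb in
  let Mk := Mmat eta r (J xb) in
  let Qk := Qmat eta r s (J xb) in
  let Hk := Hmat p n r s in
  let Gk := Gmat eta r s (J xb) in
  let wk1 := wk - Mk *m (wk - wb) in
  [/\ Mk \in unitmx, Hk = Qk *m invmx Mk, posdef Hk,
      Gk = Qk^T + Qk - Mk^T *m Hk *m Mk & posdef Gk] /\
      forall (x : 'cV[R]_n) (l : 'cV[R]_p), X x -> nonnegv l ->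
        let w := col_mx x l in
        rho * (f x - f xb) + dotv (w - wb) (eta^-1 *: Gam Phi J xb lb)
          >= 1 / 2 * qform Gk (wb - wk)
             + 1 / 2 * (qform Hk (w - wk1) - qform Hk (w - wk)).
Proof.
move=> _ _ cX cf _ dPhi _ rho0 mu1 eta0 _ _ Rk0 r Xb xb_min Rb0 s lb0 lb_max.
move=> wk wb Mk Qk Hk Gk wk1.
have sqrtRk0 : 0 < Num.sqrt (Rfun J xk) by rewrite sqrtr_gt0.
have r0 : 0 < r by rewrite mulr_gt0 ?invr_gt0.
have mu0 : 0 < mu := lt_trans ltr01 mu1.
have s0 : 0 < s by rewrite divr_gt0 // mulr_gt0.
have Gk_gap : (eta ^+ 2 * r)^-1 * specnorm (J xb) ^+ 2 < s.
  have -> : (eta ^+ 2 * r)^-1 * specnorm (J xb) ^+ 2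
            = Rfun J xb / (eta * Num.sqrt (Rfun J xk)).
    by rewrite -[specnorm _ ^+ 2]/(Rfun J xb) /r; field; rewrite !gt_eqF.
  by rewrite /s -mulrA ltr_pMl // divr_gt0 // mulr_gt0.
split.
  split; [exact: Mmat_unit | apply: Hmat_Qmat_invmx | exact: posdef_Hmat
         | apply: Gmat_Qmat | exact: posdef_Gmat]; exact: lt0r_neq0.
move=> x l Xx l0.
have [dPhi_xb dPhi_xbE] := dPhi xb.
have x_opt := Lag_prox_min_optimality cX cf (ltW rho0) dPhi_xb Xb Xx xb_min.
rewrite dPhi_xbE in x_opt.
have l_opt := Lag_prox_max_optimality lb0 l0 lb_max.
exact: (spice_descent (lt0r_neq0 eta0) (lt0r_neq0 r0) x_opt l_opt).
Qed.
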